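(* Let $U\subset\mathbb{R}^2$ be open, let $x:U\to\mathbb{R}^3$ be smooth, let $\xi:U\to S^2$ be a proper frontal, let $\Omega$ be a tangent moving basis of $\xi$ with $D\xi=\Omega\Delta_\Omega^T$, $\Delta_\Omega=(\delta_{ij})$. With $C_1=2\mathscr{F}_\Omega(\delta_{22}\mathscr{L}_\Omega-\delta_{12}\mathscr{M}_{1\Omega})-\mathscr{E}_\Omega\mathcal{M}$, $C_2=2\mathscr{G}_\Omega(\delta_{22}\mathscr{L}_\Omega-\delta_{12}\mathscr{M}_{1\Omega})-2\mathscr{E}_\Omega(\delta_{11}\mathscr{N}_\Omega-\delta_{21}\mathscr{M}_{2\Omega})$, $C_3=\mathscr{G}_\Omega\mathcal{M}-2\mathscr{F}_\Omega(\delta_{11}\mathscr{N}_\Omega-\delta_{21}\mathscr{M}_{2\Omega})$, where $\mathcal{M}=\delta_{11}\mathscr{M}_{1\Omega}-\delta_{21}\mathscr{L}_\Omega+\delta_{22}\mathscr{M}_{2\Omega}-\delta_{12}\mathscr{N}_\Omega$, the discriminant $\mathcal{D}=C_2^2-4C_1C_3$ of the equation $C_1b_1^2+C_2b_1b_2+C_3b_2^2=0$ is non-negative at every point of $U$, and $\mathcal{D}=0$ at a point if and only if $C_1=C_2=C_3=0$ at that point.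
   Context: A frontal is a smooth map $f:U\to\mathbb{R}^3$ admitting locally a smooth unit vector field orthogonal to $f_{u_1},f_{u_2}$; proper means its singular set has empty interior. A tangent moving basis of $\xi$ is a smooth $\Omega=(w_1\ w_2):U\to M_{3\times2}(\mathbb{R})$ with linearly independent columns whose span contains $\xi_{u_1},\xi_{u_2}$; then $D\xi=\Omega\Delta_\Omega^T$ for a unique smooth $\Delta_\Omega$. Coefficients: $\mathscr{E}_\Omega=\langle w_1,w_1\rangle$, $\mathscr{F}_\Omega=\langle w_1,w_2\rangle$, $\mathscr{G}_\Omega=\langle w_2,w_2\rangle$, $\mathscr{L}_\Omega=-\langle x_{u_1},w_1\rangle$, $\mathscr{M}_{2\Omega}=-\langle x_{u_1},w_2\rangle$, $\mathscr{M}_{1\Omega}=-\langle x_{u_2},w_1\rangle$, $\mathscr{N}_\Omega=-\langle x_{u_2},w_2\rangle$. *)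

From HB Require Import structures.
From mathcomp Require Import all_boot all_order all_algebra.
From mathcomp Require Import all_classical all_reals all_analysis.
Set Implicit Arguments. Unset Strict Implicit. Unset Printing Implicit Defensive.
Import Order.TTheory GRing.Theory Num.Theory.
Import numFieldNormedType.Exports.
Local Open Scope classical_set_scope.
Local Open Scope ring_scope.

Section Defs.
Variable R : realType.

(* points of R^2 are row vectors 'rV_2; vectors of R^3 are column vectors 'cV_3 *)

(* standard basis vector e_i of R^2 (i = 0,1 correspond to u_1,u_2) *)
Definition ebas (i : 'I_2) : 'rV[R]_2 := delta_mx 0 i.

Definition pd {V : normedModType R} (f : 'rV[R]_2 -> V) (i : 'I_2) :
  'rV[R]_2 -> V := fun u => 'D_(ebas i) f u.

Fixpoint iterpd {V : normedModType R} (s : seq 'I_2) (f : 'rV[R]_2 -> V) :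
  'rV[R]_2 -> V :=
  match s with
  | [::] => f
  | i :: s' => pd (iterpd s' f) i
  end.

Definition smooth_on {V : normedModType R} (W : set 'rV[R]_2)
  (f : 'rV[R]_2 -> V) : Prop :=
  forall (s : seq 'I_2) (u : 'rV[R]_2), W u ->
    (forall i, derivable (iterpd s f) u (ebas i)) /\
    {for u, continuous (iterpd s f)}.

Definition dot (a b : 'cV[R]_3) : R := \sum_(k < 3) a k 0 * b k 0.

Definition jac (f : 'rV[R]_2 -> 'cV[R]_3) (u : 'rV[R]_2) : 'M[R]_(3, 2) :=
  \matrix_(k < 3, j < 2) pd f j u k 0.

Definition frontal (U : set 'rV[R]_2) (f : 'rV[R]_2 -> 'cV[R]_3) : Prop :=
  smooth_on U f /\
  forall p, U p -> exists V : set 'rV[R]_2,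
    [/\ open V, V p, V `<=` U &
      exists nu : 'rV[R]_2 -> 'cV[R]_3, smooth_on V nu /\
        forall u, V u -> [/\ dot (nu u) (nu u) = 1,
                             dot (nu u) (pd f 0 u) = 0 &
                             dot (nu u) (pd f 1 u) = 0]].

Definition singular_set (U : set 'rV[R]_2) (f : 'rV[R]_2 -> 'cV[R]_3) :
  set 'rV[R]_2 := [set u | U u /\ (\rank (jac f u) < 2)%N].

Definition proper_frontal (U : set 'rV[R]_2) (f : 'rV[R]_2 -> 'cV[R]_3) :
  Prop := frontal U f /\ interior (singular_set U f) = set0.

Definition tangent_moving_basis (U : set 'rV[R]_2)
  (xi : 'rV[R]_2 -> 'cV[R]_3) (Om : 'rV[R]_2 -> 'M[R]_(3, 2)) : Prop :=
  smooth_on U Om /\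
  forall u, U u -> \rank (Om u) = 2%N /\ ((jac xi u)^T <= (Om u)^T)%MS.

Section Coefs.
Variables (x : 'rV[R]_2 -> 'cV[R]_3) (Om : 'rV[R]_2 -> 'M[R]_(3, 2))
          (Dl : 'rV[R]_2 -> 'M[R]_2) (u : 'rV[R]_2).

Definition w1 := col 0 (Om u).
Definition w2 := col 1 (Om u).
Definition cE := dot w1 w1.
Definition cF := dot w1 w2.
Definition cG := dot w2 w2.
Definition cL := - dot (pd x 0 u) w1.
Definition cM2 := - dot (pd x 0 u) w2.
Definition cM1 := - dot (pd x 1 u) w1.
Definition cN := - dot (pd x 1 u) w2.
Definition d11 := Dl u 0 0.
Definition d12 := Dl u 0 1.
Definition d21 := Dl u 1 0.
Definition d22 := Dl u 1 1.
Definition calM := d11 * cM1 - d21 * cL + d22 * cM2 - d12 * cN.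
Definition C1 := 2 * cF * (d22 * cL - d12 * cM1) - cE * calM.
Definition C2 := 2 * cG * (d22 * cL - d12 * cM1)
                 - 2 * cE * (d11 * cN - d21 * cM2).
Definition C3 := cG * calM - 2 * cF * (d11 * cN - d21 * cM2).
Definition discr := C2 ^+ 2 - 4 * C1 * C3.
End Coefs.
End Defs.

From HB Require Import structures.
From mathcomp Require Import all_boot all_order all_algebra.
From mathcomp Require Import all_classical all_reals all_analysis.
From mathcomp Require Import ring.
Set Implicit Arguments. Unset Strict Implicit. Unset Printing Implicit Defensive.
Import Order.TTheory GRing.Theory Num.Theory.
Import numFieldNormedType.Exports.
Local Open Scope classical_set_scope.
Local Open Scope ring_scope.

(* Since Omega has rank 2, its Gram matrix (E F; F G) is positive definite;
   nothing else about the frontal is used.  The coefficients involve the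
   second-order data only through P = d22 L - d12 M1, Q = d11 N - d21 M2 and
   calM, and with X = G P - E Q and Y = E G calM - F (G P + E Q),
     E G D = 4 ((E G - F^2) X^2 + Y^2).
   Hence D >= 0, and D = 0 forces X = Y = 0, whence C1 = C2 = C3 = 0. *)

Section BinaryDiscriminant.
Variables (R : realDomainType) (E F G P Q M : R).

Local Notation c1 := (2 * F * P - E * M).
Local Notation c2 := (2 * G * P - 2 * E * Q).
Local Notation c3 := (G * M - 2 * F * Q).
Local Notation X := (G * P - E * Q).
Local Notation Y := (E * G * M - F * (G * P + E * Q)).

Lemma discr_sum_of_squares :
  E * G * (c2 ^+ 2 - 4 * c1 * c3) = 4 * ((E * G - F ^+ 2) * X ^+ 2 + Y ^+ 2).
Proof. ring. Qed.

Hypotheses (E_gt0 : 0 < E) (G_gt0 : 0 < G) (det_gt0 : 0 < E * G - F ^+ 2).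

Let EG_gt0 : 0 < E * G. Proof. exact: mulr_gt0. Qed.

Let sos_ge0 : 0 <= (E * G - F ^+ 2) * X ^+ 2.
Proof. by rewrite mulr_ge0 ?sqr_ge0 ?ltW. Qed.

Lemma discr_ge0 : 0 <= c2 ^+ 2 - 4 * c1 * c3.
Proof.
by rewrite -(pmulr_rge0 _ EG_gt0) discr_sum_of_squares mulr_ge0 ?addr_ge0 ?sqr_ge0.
Qed.

Lemma discr_eq0 : c2 ^+ 2 - 4 * c1 * c3 = 0 <-> [/\ c1 = 0, c2 = 0 & c3 = 0].
Proof.
split; last by case=> -> -> ->; ring.
move=> D0; have : (E * G - F ^+ 2) * X ^+ 2 + Y ^+ 2 == 0.
  move: discr_sum_of_squares; rewrite D0 mulr0 => /esym/eqP.
  by rewrite mulf_eq0 pnatr_eq0.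
rewrite paddr_eq0 ?sqr_ge0 // mulf_eq0 (gt_eqF det_gt0) !sqrf_eq0.
move=> /andP[/eqP X0 /eqP Y0].
have EG_reg := mulfI (lt0r_neq0 EG_gt0).
split.
- apply: EG_reg; rewrite mulr0.
  by transitivity (E * F * X - E * Y); [ring | rewrite X0 Y0; ring].
- by transitivity (2 * X); [ring | rewrite X0 mulr0].
- apply: EG_reg; rewrite mulr0.
  by transitivity (G * F * X + G * Y); [ring | rewrite X0 Y0; ring].
Qed.

End BinaryDiscriminant.

Lemma pos_def_form2 (R : numDomainType) (E F G : R) :
  (forall a b, (a != 0) || (b != 0) -> 0 < a ^+ 2 * E + 2 * a * b * F + b ^+ 2 * G) ->
  [/\ 0 < E, 0 < G & 0 < E * G - F ^+ 2].
Proof.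
move=> posq.
have E_gt0 : 0 < E.
  suff -> : E = 1 ^+ 2 * E + 2 * 1 * 0 * F + 0 ^+ 2 * G by rewrite posq ?oner_neq0.
  ring.
split=> //.
  suff -> : G = 0 ^+ 2 * E + 2 * 0 * 1 * F + 1 ^+ 2 * G by rewrite posq ?oner_neq0 ?orbT.
  ring.
rewrite -(pmulr_rgt0 _ E_gt0).
suff -> : E * (E * G - F ^+ 2) = F ^+ 2 * E + 2 * F * (- E) * F + (- E) ^+ 2 * G.
  by rewrite posq // oppr_eq0 (gt_eqF E_gt0) orbT.
ring.
Qed.

Lemma sum_ord3 (V : nmodType) (f : 'I_3 -> V) : \sum_(k < 3) f k = f 0 + f 1 + f 2.
Proof.
by rewrite !big_ord_recl big_ord0 addr0 addrA; congr (f _ + f _ + f _); apply: val_inj.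
Qed.

Lemma sum_ord2 (V : nmodType) (f : 'I_2 -> V) : \sum_(k < 2) f k = f 0 + f 1.
Proof. by rewrite !big_ord_recl big_ord0 addr0; congr (f _ + f _); apply: val_inj. Qed.

Section GramForm.
Variable R : realType.

Lemma dot_self_gt0 (v : 'cV[R]_3) : v != 0 -> 0 < dot v v.
Proof.
move=> v_neq0; rewrite lt_def sumr_ge0 ?andbT => [|k _]; last exact: sqr_ge0.
apply: contra v_neq0 => /eqP/psumr_eq0P v0; apply/eqP/matrixP => k i.
rewrite (ord1 i) mxE; apply/eqP; rewrite -sqrf_eq0; apply/eqP.
by apply: v0 => // j _; apply: sqr_ge0.
Qed.

Lemma dot_mulmx_col (A : 'M[R]_(3, 2)) (c : 'cV[R]_2) :
  dot (A *m c) (A *m c) =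
  c 0 0 ^+ 2 * dot (col 0 A) (col 0 A) + 2 * c 0 0 * c 1 0 * dot (col 0 A) (col 1 A)
  + c 1 0 ^+ 2 * dot (col 1 A) (col 1 A).
Proof. by rewrite /dot !sum_ord3 !mxE !sum_ord2; ring. Qed.

Lemma gram_form_gt0 (A : 'M[R]_(3, 2)) : \rank A = 2%N ->
  forall a b, (a != 0) || (b != 0) ->
  0 < a ^+ 2 * dot (col 0 A) (col 0 A) + 2 * a * b * dot (col 0 A) (col 1 A)
      + b ^+ 2 * dot (col 1 A) (col 1 A).
Proof.
move=> rkA a b ab_neq0.
pose c : 'cV[R]_2 := \col_i (if i == 0 then a else b).
have c_neq0 : c != 0.
  apply: contraTneq ab_neq0 => /matrixP c0.
  by move: (c0 0 0) (c0 1 0); rewrite !mxE /= => -> ->; rewrite eqxx.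
have Ac_neq0 : A *m c != 0.
  have freeAT : row_free A^T by rewrite /row_free mxrank_tr rkA.
  by rewrite -trmx_eq0 trmx_mul mulmx_free_eq0 // trmx_eq0.
by have := dot_self_gt0 Ac_neq0; rewrite dot_mulmx_col !mxE.
Qed.

End GramForm.

Theorem proposition4p5 (R : realType) (U : set 'rV[R]_2)
  (x xi : 'rV[R]_2 -> 'cV[R]_3) (Om : 'rV[R]_2 -> 'M[R]_(3, 2))
  (Dl : 'rV[R]_2 -> 'M[R]_2) :
  open U ->
  smooth_on U x ->
  (forall u, U u -> dot (xi u) (xi u) = 1) ->
  proper_frontal U xi ->
  tangent_moving_basis U xi Om ->
  smooth_on U Dl ->
  (forall u, U u -> jac xi u = Om u *m (Dl u)^T) ->
  forall u, U u ->
    0 <= discr x Om Dl u /\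
    (discr x Om Dl u = 0 <->
       [/\ C1 x Om Dl u = 0, C2 x Om Dl u = 0 & C3 x Om Dl u = 0]).
Proof.
move=> _ _ _ _ [_ basis] _ _ u Uu.
have [rkOm _] := basis u Uu.
have [E_gt0 G_gt0 det_gt0] := pos_def_form2 (gram_form_gt0 rkOm).
rewrite /discr /C1 /C2 /C3.
split; [exact: discr_ge0 | exact: discr_eq0].
Qed.
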